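(* Let $p$ be a prime, $R=\mathbb{F}_p[x,x^{-1}]$, $n\ge1$, let $U$ be an additive subgroup of $R^n$, and let $(f_m)_{m\ge1}$ be an enumeration of the irreducible elements of $\mathbb{F}_p[x]$. Then $U_m=f_mU\to\{0\}$.
   Context: Convergence of subsets $U_m\to\{0\}$ of $R^n$ means that for every $v\in R^n$, the truth value of $v\in U_m$ is eventually equal to that of $v\in\{0\}$ (the topology induced from $\{0,1\}^{R^n}$). *)

From mathcomp Require Import all_boot all_order all_algebra.
From mathcomp Require Import fraction.
Set Implicit Arguments. Unset Strict Implicit. Unset Printing Implicit Defensive.
Import Order.TTheory GRing.Theory Num.Theory.
Local Open Scope ring_scope.

Notation "x %:F" := (@FracField.tofrac _ x) : ring_scope.

(* The fraction field F_p(x) of F_p[x]; the Laurent polynomial ring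
   R = F_p[x, x^{-1}] is realised as the subring of elements q / x^k. *)

Definition FpX (p : nat) := {fraction {poly 'F_p}}.

Definition laurent (p : nat) (r : FpX p) : Prop :=
  exists (q : {poly 'F_p}) (k : nat), r = q%:F / ('X^k)%:F.

Definition laurent_vec (p n : nat) (v : 'rV[FpX p]_n) : Prop :=
  forall i, laurent (v 0 i).

Definition additive_subgroup (p n : nat) (U : 'rV[FpX p]_n -> Prop) : Prop :=
  [/\ forall u, U u -> laurent_vec u,
      U 0 &
      forall u w, U u -> U w -> U (u - w)].

Definition scale_set (p n : nat) (f : {poly 'F_p}) (U : 'rV[FpX p]_n -> Prop)
  : 'rV[FpX p]_n -> Prop :=
  fun v => exists u, U u /\ v = f%:F *: u.

Definition irreducible_enum (p : nat) (f : nat -> {poly 'F_p}) : Prop :=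
  [/\ forall m, (1 <= m)%N -> irreducible_poly (f m),
      forall m m', (1 <= m)%N -> (1 <= m')%N -> f m = f m' -> m = m' &
      forall q, irreducible_poly q -> exists2 m, (1 <= m)%N & f m = q].

(* Convergence of subsets of R^n in {0,1}^(R^n): for every v in R^n,
   the truth value of v \in U_m is eventually that of v \in L. *)
Definition subsets_converge (p n : nat) (Um : nat -> 'rV[FpX p]_n -> Prop)
  (L : 'rV[FpX p]_n -> Prop) : Prop :=
  forall v, laurent_vec v ->
    exists N, forall m, (N <= m)%N -> (Um m v <-> L v).

From mathcomp Require Import all_boot all_order all_algebra.
From mathcomp Require Import fraction.
From Stdlib Require Import Classical.
Import GRing.Theory.
Set Implicit Arguments. Unset Strict Implicit.
Local Open Scope ring_scope.

(* Fix a nonzero v in R^n and a nonzero coordinate q / x^k of v.  If v = f u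
   with u in R^n, clearing denominators shows that f divides q x^j for some j,
   so an irreducible f is associate to x or divides q: its size is at most
   max(size q, 2).  There are finitely many polynomials of bounded size over
   F_p, and an enumeration visits each of them at most once, so f_m exceeds
   that size for all large m and v is eventually outside f_m U. *)

Lemma irreducible_dvdp_mulXn_size (F : fieldType) (f q : {poly F}) (j : nat) :
  irreducible_poly f -> q != 0 -> f %| q * 'X^j ->
  (size f <= maxn (size q) 2)%N.
Proof.
move=> irr_f q_neq0 dvd_f.
have [dvd_fX | ndvd_fX] := boolP (f %| 'X).
  by have := dvdp_leq (negbT (polyX_eq0 F)) dvd_fX; rewrite size_polyX leq_max orbC => ->.
have cop_fXj : coprimep f 'X^j.
  by rewrite coprimep_expr // irreducible_poly_coprime.
by rewrite leq_max dvdp_leq // -(Gauss_dvdpl _ cop_fXj).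
Qed.

Lemma tofrac_div_eq_mul_div (R : idomainType) (a b c d e : R) :
  b != 0 -> e != 0 -> a%:F / b%:F = c%:F * (d%:F / e%:F) ->
  a * e = c * (d * b).
Proof.
move=> b_neq0 e_neq0; rewrite mulrA => /eqP.
rewrite eqr_div ?tofrac_eq0 // -!tofracM tofrac_eq => /eqP->.
by rewrite mulrA.
Qed.

Lemma injective_eventually_notin (T : eqType) (g : nat -> T) (s : seq T) :
  injective g -> exists N, forall m, (N <= m)%N -> g m \notin s.
Proof.
move=> inj_g; elim: s => [|a s [N notin_s]]; first by exists 0%N.
have [[m0 g_m0] | never_a] := classic (exists m0, g m0 = a).
  exists (maxn N m0.+1) => m; rewrite geq_max => /andP[/notin_s m_notin lt_m0_m].
  rewrite in_cons negb_or m_notin andbT -g_m0 (inj_eq inj_g).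
  by apply: contraTneq lt_m0_m => ->; rewrite ltnn.
exists N => m /notin_s m_notin; rewrite in_cons negb_or m_notin andbT.
by apply/eqP => g_m; apply: never_a; exists m.
Qed.

Lemma bounded_size_polys_finite (F : finNzRingType) (B : nat) :
  exists s : seq {poly F}, forall q : {poly F}, (size q <= B)%N -> q \in s.
Proof.
exists [seq val q | q : {poly_B F}] => q size_q.
by rewrite -(npolypK size_q) map_f ?mem_enum.
Qed.

Lemma injective_poly_size_eventually_gt (F : finNzRingType) (g : nat -> {poly F})
  (B : nat) : injective g -> exists N, forall m, (N <= m)%N -> (B < size (g m))%N.
Proof.
move=> inj_g; have [s small_in_s] := bounded_size_polys_finite F B.
have [N notin_s] := injective_eventually_notin s inj_g.
exists N => m /notin_s; rewrite ltnNge; exact: contra (small_in_s _).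
Qed.

Theorem lemma6p16 (p : nat) (hp : prime p) (n : nat) (hn : (1 <= n)%N)
  (U : 'rV[FpX p]_n -> Prop) (hU : additive_subgroup U)
  (f : nat -> {poly 'F_p}) (hf : irreducible_enum f) :
  subsets_converge (fun m => scale_set (f m) U) (fun v => v = 0).
Proof.
case: hU => U_laurent U0 _; case: hf => f_irr f_inj _ v v_laurent.
have [-> | v_neq0] := eqVneq v 0.
  by exists 0%N => m _; split=> // _; exists 0; split; rewrite ?scaler0.
have /existsP [i vi_neq0] : [exists i, v 0 i != 0].
  apply: contraR v_neq0 => /existsPn v0; apply/eqP/rowP => j.
  by rewrite mxE; apply/eqP/negPn/v0.
have [q [k vi_eq]] := v_laurent i.
have q_neq0 : q != 0 by apply: contraNneq vi_neq0 => q0; rewrite vi_eq q0 mul0r.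
have f1_inj : injective (f \o succn).
  by move=> m m' /f_inj-/(_ isT isT) [].
have [N size_f_gt] := injective_poly_size_eventually_gt (maxn (size q) 2) f1_inj.
exists N.+1 => -[//|m] /= /size_f_gt size_fm_gt.
split=> [[u [Uu v_eq]] | v0]; last by rewrite v0 eqxx in v_neq0.
have [r [j ui_eq]] := U_laurent u Uu i.
have Xn_neq0 (l : nat) : ('X^l : {poly 'F_p}) != 0 by rewrite monic_neq0 ?monicXn.
have qXj_eq : q * 'X^j = f m.+1 * (r * 'X^k).
  apply: tofrac_div_eq_mul_div (Xn_neq0 _) (Xn_neq0 _) _.
  by rewrite -vi_eq -ui_eq v_eq mxE.
have dvd_fm : f m.+1 %| q * 'X^j by rewrite qXj_eq dvdp_mulIl.
have := irreducible_dvdp_mulXn_size (f_irr m.+1 isT) q_neq0 dvd_fm.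
by rewrite leqNgt size_fm_gt.
Qed.
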